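(* Let $d\geq 1$. Every $d$-degenerate graph $G$ with $n$ vertices and $m\geq\binom{d}{2}$ edges satisfies $$c(G)\;\leq\; n+\frac{(2^d-1)m}{d}-\frac{(d-3)2^d+d+1}{2}.$$
   Context: All graphs are finite, simple and undirected. A graph $G$ is $d$-degenerate if every subgraph of $G$ has a vertex of degree at most $d$. A clique of a graph $G$ is a (possibly empty) set of pairwise adjacent vertices; $c(G)$ denotes the number of cliques of $G$ (including the empty clique, all single vertices and all edges). *)

From mathcomp Require Import all_boot all_order all_algebra.
Set Implicit Arguments. Unset Strict Implicit. Unset Printing Implicit Defensive.

Definition simple_graph (T : finType) (e : rel T) : Prop :=
  symmetric e /\ irreflexive e.

Definition edges (T : finType) (e : rel T) : {set {set T}} :=
  [set A : {set T} | [exists x, exists y, (e x y) && (A == [set x; y])]].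

Definition num_edges (T : finType) (e : rel T) : nat := #|edges e|.

Definition is_clique (T : finType) (e : rel T) (A : {set T}) : bool :=
  [forall x in A, forall y in A, (x != y) ==> e x y].

(* c(G): number of cliques, including the empty clique. *)
Definition num_cliques (T : finType) (e : rel T) : nat :=
  #|[set A : {set T} | is_clique e A]|.

(* d-degenerate: every (nonempty) subgraph has a vertex of degree <= d.
   It suffices to consider induced subgraphs on nonempty vertex sets S
   (deleting edges only lowers degrees). *)
Definition degenerate (T : finType) (e : rel T) (d : nat) : Prop :=
  forall S : {set T}, S != set0 ->
    exists2 v, v \in S & #|[set u in S | e v u]| <= d.

From mathcomp Require Import all_boot all_order all_algebra.
From mathcomp Require Import zify ring lra.
Set Implicit Arguments. Unset Strict Implicit. Unset Printing Implicit Defensive.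

(* Deleting a vertex [v] of degree [k] removes [k]
   edges and exactly the cliques through [v], each of which is [v] added to a clique
   of the neighbourhood of [v]: at most [2 ^ k] of them.  A [d]-degenerate graph has
   a vertex with [k <= d], and convexity of [2 ^ x] gives
   [d * 2 ^ k <= d + (2 ^ d - 1) * k], which is exactly what the bound absorbs as
   long as the smaller graph keeps [C(d, 2)] edges.  Otherwise [m = C(d, 2) + j]
   with [j <= d], and the estimate [c <= n + 2 ^ t + 2 ^ j - t - 1] for graphs with
   at most [C(t, 2) + j] edges, taken at [t = d], finishes the argument. *)

Lemma leq_exp2_exchange j k t :
  j <= k -> k <= t -> 2 ^ (t - k + j) + 2 ^ k <= 2 ^ t + 2 ^ j.
Proof.
move=> jk kt; rewrite -{2}(subnK kt) !expnD.
have := leq_pexp2l (isT : 0 < 2) jk; have := expn_gt0 2 (t - k); nia.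
Qed.

Lemma exp2_chord d j : j <= d -> d * 2 ^ j <= d + (2 ^ d - 1) * j.
Proof.
move=> jd; rewrite -(subnK jd) expnD; move: (d - j) => r.
have := ltn_expl r (ltnSn 1); have := expn_gt0 2 j.
have : 2 ^ j <= j * 2 ^ j + 1 by case: j {jd} => // j; rewrite mulSn -addnA leq_addr.
nia.
Qed.

Lemma bin2_double d : 'C(d, 2) * 2 + d = d ^ 2.
Proof. by elim: d => // d IH; rewrite binS bin1 !expnS expn0 in IH *; lia. Qed.

Lemma is_cliqueP (T : finType) (e : rel T) (A : {set T}) :
  reflect {in A &, forall x y, x != y -> e x y} (is_clique e A).
Proof.
apply: (iffP forall_inP) => [cA x y xA yA | cA x xA].
  by move/forall_inP/(_ y yA)/implyP: (cA x xA).
by apply/forall_inP => y yA; apply/implyP; apply: cA.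
Qed.

Section InducedSubgraphs.

Variables (T : finType) (e : rel T).
Hypotheses (e_sym : symmetric e) (e_irr : irreflexive e).

Definition nbhd (S : {set T}) (v : T) : {set T} := [set u in S | e v u].

Definition cliques_in (S : {set T}) : {set {set T}} :=
  [set A | is_clique e A & A \subset S].

Definition edges_in (S : {set T}) : {set {set T}} :=
  [set A in cliques_in S | #|A| == 2].

Lemma cliques_in0 : cliques_in set0 = [set set0].
Proof.
apply/setP => A; rewrite !inE subset0 andbC; case: eqP => // ->.
by apply/is_cliqueP => x; rewrite inE.
Qed.

Lemma edges_in0 : edges_in set0 = set0.
Proof.
by apply/setP => A; rewrite inE cliques_in0 !inE; case: eqP => // ->; rewrite cards0.
Qed.

Lemma edges_in_setT : edges_in [set: T] = edges e.
Proof.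
apply/setP => A; rewrite !inE subsetT andbT; apply/andP/existsP.
  case=> cA /cards2P [x [y [xy defA]]]; exists x; apply/existsP; exists y.
  by rewrite defA eqxx andbT (is_cliqueP _ _ cA) // defA !inE eqxx ?orbT.
case=> x /existsP [y /andP [exy /eqP ->]]; have xy : x != y.
  by apply: contraTneq exy => ->; rewrite e_irr.
split; last by rewrite cards2 xy.
apply/is_cliqueP => u w; rewrite !inE.
by do 2![case/orP=> /eqP ->]; rewrite ?eqxx // e_sym.
Qed.

Lemma nbhd_notin (S B : {set T}) v : B \subset nbhd S v -> v \notin B.
Proof. by move=> /subsetP BN; apply/negP => /BN; rewrite inE e_irr andbF. Qed.

Lemma cliques_in_del (S : {set T}) v : v \in S ->
  cliques_in S = cliques_in (S :\ v) :|: [set v |: B | B in cliques_in (nbhd S v)].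
Proof.
move=> vS; apply/setP => A; rewrite !inE; apply/andP/orP.
  case=> cA AS; have [vA | vA] := boolP (v \in A); [right | left].
    apply/imsetP; exists (A :\ v); last by rewrite setD1K.
    rewrite inE; apply/andP; split.
      apply/is_cliqueP => x y /setD1P [_ xA] /setD1P [_ yA].
      exact: (is_cliqueP _ _ cA).
    apply/subsetP => x /setD1P [xv xA]; rewrite inE (subsetP AS _ xA).
    by rewrite (is_cliqueP _ _ cA) // eq_sym.
  rewrite cA; apply/subsetP => x xA; rewrite !inE (subsetP AS _ xA) andbT.
  by apply: contraNneq vA => <-.
case=> [/andP [cA /subset_trans -> //] | /imsetP [B]]; first exact: subsetDl.
rewrite inE => /andP [cB /subsetP BN] ->; split.
  apply/is_cliqueP => x y; rewrite !inE.
  case/orP=> [/eqP -> | xB] /orP [/eqP -> | yB]; rewrite ?eqxx //.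
  - by move: (BN y yB); rewrite inE => /andP [].
  - by move: (BN x xB); rewrite inE e_sym => /andP [].
  - exact: (is_cliqueP _ _ cB).
by apply/subsetP => x; rewrite !inE => /orP [/eqP -> // | /BN]; rewrite inE => /andP [].
Qed.

Lemma card_cliques_in_del (S : {set T}) v : v \in S ->
  #|cliques_in S| = #|cliques_in (S :\ v)| + #|cliques_in (nbhd S v)|.
Proof.
move=> vS; have inj_v : {in cliques_in (nbhd S v) &, injective (fun B => v |: B)}.
  move=> B C; rewrite !inE => /andP [_ /nbhd_notin vB] /andP [_ /nbhd_notin vC] BC.
  by rewrite -(setU1K vB) -(setU1K vC) BC.
rewrite (cliques_in_del vS) -(card_in_imset inj_v) -cardsUI.
have -> : cliques_in (S :\ v) :&: [set v |: B | B in cliques_in (nbhd S v)] = set0.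
  apply/setP => A; rewrite !inE; apply/andP => -[/andP [_ /subsetP AS]].
  by case/imsetP=> B _ defA; move: (AS v); rewrite defA !inE eqxx => /(_ isT).
by rewrite cards0 addn0.
Qed.

Lemma edges_in_del (S : {set T}) v : v \in S ->
  edges_in S = edges_in (S :\ v) :|: [set [set v; u] | u in nbhd S v].
Proof.
move=> vS; apply/setP => A.
rewrite [in LHS]inE (cliques_in_del vS) in_setU andb_orl in_setU.
congr (_ || _); first by rewrite [RHS]inE.
apply/andP/imsetP.
  case=> /imsetP [B]; rewrite inE => /andP [_ BN] ->.
  rewrite cardsU1 (nbhd_notin BN) => /eqP [/eqP /cards1P [u defB]].
  by exists u; rewrite ?defB // -sub1set -defB.
case=> u; rewrite inE => /andP [uS evu] ->; split.
  apply/imsetP; exists [set u] => //; rewrite inE sub1set inE uS evu andbT.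
  apply/andP; split => //; apply/is_cliqueP => x y.
  by rewrite !inE => /eqP -> /eqP ->; rewrite eqxx.
have vu : v != u by apply: contraTneq evu => <-; rewrite e_irr.
by rewrite cards2 vu.
Qed.

Lemma card_edges_in_del (S : {set T}) v : v \in S ->
  #|edges_in S| = #|edges_in (S :\ v)| + #|nbhd S v|.
Proof.
move=> vS; have inj_v : {in nbhd S v &, injective (fun u => [set v; u])}.
  move=> u w; rewrite !inE => /andP [_ evu] _ /setP /(_ u).
  rewrite !inE eqxx orbT => /esym /orP [/eqP uv | /eqP //].
  by rewrite uv e_irr in evu.
rewrite (edges_in_del vS) -(card_in_imset inj_v) -cardsUI.
have -> : edges_in (S :\ v) :&: [set [set v; u] | u in nbhd S v] = set0.
  apply/setP => A; rewrite !inE; apply/andP => -[/andP [/andP [_ /subsetP AS] _]].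
  by case/imsetP=> u _ defA; move: (AS v); rewrite defA !inE eqxx => /(_ isT).
by rewrite cards0 addn0.
Qed.

Lemma card_cliques_in_le (S : {set T}) : #|cliques_in S| <= 2 ^ #|S|.
Proof.
rewrite -card_powerset; apply/subset_leq_card/subsetP => A.
by rewrite !inE => /andP [].
Qed.

Lemma nbhd_setD1 (S : {set T}) v w : nbhd (S :\ v) w = nbhd S w :\ v.
Proof. by apply/setP => u; rewrite !inE andbA. Qed.

Lemma bin2_le_card_edges_in k (S : {set T}) : S != set0 ->
  {in S, forall v, k <= #|nbhd S v|} -> 'C(k.+1, 2) <= #|edges_in S|.
Proof.
elim: k S => [|k IH] S /set0Pn [v vS] mindeg; first by rewrite bin_small.
rewrite (card_edges_in_del vS) binS bin1 leq_add ?mindeg //; apply: IH.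
  have /card_gt0P [u] : 0 < #|nbhd S v| by apply: leq_trans (mindeg v vS).
  rewrite inE => /andP [uS evu]; apply/set0Pn; exists u; rewrite !inE uS andbT.
  by apply: contraTneq evu => ->; rewrite e_irr.
move=> w /setD1P [_ wS]; rewrite nbhd_setD1.
rewrite -ltnS (leq_trans (mindeg w wS)) // (cardsD1 v (nbhd S w)) -add1n.
by rewrite leq_add2r leq_b1.
Qed.

(* Deleting a vertex of minimum degree [k] costs [k] edges and at most [2 ^ k]
   cliques, and [C(k + 1, 2) <= #|edges_in S|] bounds [k]; the budget [C(t, 2) + j]
   is then passed on as [C(t, 2) + (j - k)] or, when [j < k], as
   [C(t - 1, 2) + (t - 1 - k + j)]. *)
Lemma card_cliques_in_few_edges (S : {set T}) t j : j <= t ->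
  #|edges_in S| <= 'C(t, 2) + j ->
  #|cliques_in S| + t + 1 <= #|S| + 2 ^ t + 2 ^ j.
Proof.
have [n] := ubnP #|S|; elim: n S t j => // n IH S t j ltSn jt edgesS.
have [->|[v0 v0S]] := set_0Vmem S.
  rewrite cliques_in0 cards1 cards0.
  by have := ltn_expl t (ltnSn 1); have := expn_gt0 2 j; lia.
have [v vS mindeg] := arg_minnP (fun v => #|nbhd S v|) v0S.
have {}vS : v \in S := vS.
set k := #|nbhd S v| in mindeg.
have edges_lb : 'C(k.+1, 2) <= #|edges_in S|.
  by apply: bin2_le_card_edges_in; [apply/set0Pn; exists v | exact: mindeg].
have cardS : #|S| = #|S :\ v| + 1 by rewrite (cardsD1 v S) vS addnC.
have ltSn' : #|S :\ v| < n by lia.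
have cliquesS := card_cliques_in_del vS.
have cliquesN : #|cliques_in (nbhd S v)| <= 2 ^ k := card_cliques_in_le _.
have edgesS_del : #|edges_in S| = #|edges_in (S :\ v)| + k := card_edges_in_del vS.
have [kj | jk] := leqP k j.
  have := IH _ t (j - k) ltSn' (leq_trans (leq_subr k j) jt) ltac:(lia).
  by have := leq_exp2_exchange (leq0n k) kj; rewrite addn0 expn0; lia.
have kt : k < t.
  rewrite ltnNge; apply: contraTN edges_lb => /(leq_bin2l 2).
  by rewrite -ltnNge binS bin1; lia.
case: t jt edgesS kt => // t jt; rewrite binS bin1 ltnS => edgesS kt.
have := IH _ t (t - k + j) ltSn' ltac:(lia) ltac:(lia).
have := leq_exp2_exchange (ltnW jk) kt.
set p := 2 ^ (t - k + j); rewrite expnS; lia.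
Qed.

(* The theorem's bound multiplied by [2 * d], with the negative terms moved to
   the right-hand side. *)
Lemma card_cliques_in_degenerate d (S : {set T}) : degenerate e d ->
  'C(d, 2) <= #|edges_in S| ->
  2 * d * #|cliques_in S| + d * (d + 1) + d ^ 2 * 2 ^ d <=
    2 * d * #|S| + 2 * (2 ^ d - 1) * #|edges_in S| + 3 * d * 2 ^ d.
Proof.
move=> degen_d; have [n] := ubnP #|S|; elim: n S => // n IH S ltSn edgesS.
have [few | many] := leqP #|edges_in S| ('C(d, 2) + d).
  have [j jd edgesE] : exists2 j, j <= d & #|edges_in S| = 'C(d, 2) + j.
    by exists (#|edges_in S| - 'C(d, 2)); lia.
  have := card_cliques_in_few_edges jd (eq_leq edgesE); rewrite edgesE.
  by have := exp2_chord jd; have := bin2_double d; nia.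
have [v vS degv] : exists2 v, v \in S & #|nbhd S v| <= d.
  apply: degen_d; apply: contraTneq many => ->.
  by rewrite edges_in0 cards0.
have cardS : #|S| = #|S :\ v| + 1 by rewrite (cardsD1 v S) vS addnC.
have cliquesS := card_cliques_in_del vS.
have cliquesN := card_cliques_in_le (nbhd S v).
have edgesS_del := card_edges_in_del vS.
have := IH (S :\ v) ltac:(lia) ltac:(lia).
by have := exp2_chord degv; nia.
Qed.

End InducedSubgraphs.

Import GRing.Theory Num.Theory.
Local Open Scope ring_scope.

Theorem theorem4 (d : nat) (T : finType) (e : rel T) :
  (1 <= d)%N ->
  simple_graph e ->
  degenerate e d ->
  ('C(d, 2) <= num_edges e)%N ->
  ((num_cliques e)%:R : rat) <=
    (#|T|)%:R + ((2 ^ d - 1)%:R * (num_edges e)%:R) / d%:R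
    - (((d%:R - 3) * (2 ^ d)%:R + d%:R + 1) / 2).
Proof.
move=> d_gt0 [e_sym e_irr] degen_d.
have cliquesT : cliques_in e [set: T] = [set A | is_clique e A].
  by apply/setP => A; rewrite !inE subsetT andbT.
rewrite /num_edges /num_cliques -edges_in_setT // -cliquesT => edgesT.
have := card_cliques_in_degenerate e_sym e_irr degen_d edgesT.
rewrite cardsT -(ler_nat rat) !(natrD, natrM) natrB ?expn_gt0 //.
set n := #|T|%:R; set m := #|edges_in _ _|%:R.
set p := (2 ^ d)%:R; set x := d%:R.
have x_gt0 : 0 < x by rewrite ltr0n.
move=> ineq; rewrite -(ler_pM2l (_ : 0 < 2 * x)) ?mulr_gt0 //.
have -> : 2 * x * (n + (p - 1) * m / x - ((x - 3) * p + x + 1) / 2)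
    = 2 * x * n + 2 * (p - 1) * m - x * ((x - 3) * p + x + 1).
  by field; rewrite lt0r_neq0.
lra.
Qed.
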